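(* Let $B=2\pi/\sqrt{6}$. For all sufficiently large integers $N$ and all integers $\ell$ with $\sqrt{N}(\log N)^2<|\ell|\le N/2$, $$V_d\left(\ell,\,N+\frac{|\ell|(|\ell|+1)}{2}\right)=p(N)\left(1+O\left(N^{-\sqrt{\log N}}\right)\right),$$ with an absolute implied constant.
   Context: A strongly concave composition of a nonnegative integer $n$ is a finite sequence of nonnegative integers $(a_1,\dots,a_s)$, $s\ge 1$, summing to $n$, such that for some index $k$ with $1\le k\le s$ one has $a_1>a_2>\dots>a_{k-1}>a_k<a_{k+1}<\dots<a_s$. Its rank is $s-2k+1$. $V_d(m,n)$ denotes the number of strongly concave compositions of $n$ with rank $m$. $p(n)$ is the partition function, with $p(n)=0$ for negative $n$. *)

From Stdlib Require Import Reals ZArith Arith List Lia Bool.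
Open Scope bool_scope.
Import ListNotations.

Fixpoint lists_of_len (len bound : nat) : list (list nat) :=
  match len with
  | O => [ [] ]
  | S l => flat_map (fun x => map (cons x) (lists_of_len l bound)) (seq 0 (S bound))
  end.

Definition lists_upto (maxlen bound : nat) : list (list nat) :=
  flat_map (fun len => lists_of_len len bound) (seq 0 (S maxlen)).

Definition sumn (a : list nat) : nat := fold_right Nat.add 0 a.

(* a is 0-indexed here: a_i (1-indexed, as in the paper) = nth (i-1) a 0. *)
Definition a_at (a : list nat) (i : nat) : nat := nth (i - 1) a 0.

Definition sc_at (a : list nat) (k : nat) : bool :=
  let s := length a in
  (1 <=? k) && (k <=? s) &&
  forallb (fun i => a_at a (S i) <? a_at a i) (seq 1 (k - 1)) &&
  forallb (fun i => a_at a i <? a_at a (S i)) (seq k (s - k)).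

Definition sc_rank (a : list nat) (m : Z) : bool :=
  existsb (fun k => sc_at a k &&
                    Z.eqb (Z.of_nat (length a) - 2 * Z.of_nat k + 1) m)
          (seq 1 (length a)).

(* Every such composition has s >= 1 and is enumerated: entries are <= n
   (they sum to n) and the length is <= n+1 (a_k is the strict unique
   minimum, so at most one entry is 0, all others are >= 1). *)
Definition V_d (m : Z) (n : nat) : nat :=
  length (filter (fun a => (1 <=? length a) && (sumn a =? n) && sc_rank a m)
                 (lists_upto (S n) n)).

Fixpoint nonincr (a : list nat) : bool :=
  match a with
  | x :: ((y :: _) as t) => (y <=? x) && nonincr t
  | _ => true
  end.

Definition part_count (n : nat) : nat :=
  length (filter (fun a => (sumn a =? n) && forallb (fun x => 1 <=? x) a && nonincr a)
                 (lists_upto n n)).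

Definition p (n : Z) : nat := if (n <? 0)%Z then 0 else part_count (Z.to_nat n).

From Pilot Require Import Defs.
From Stdlib Require Import Reals ZArith Arith List Lia Lra.
From mathcomp Require ssreflect ssrfun ssrbool eqtype ssrnat seq path bigop div.
From mathcomp Require zify.

(* V_d(l, N + T(l)) = p(N) (1 + O(N^(-sqrt(log N)))), T(l) = l(l+1)/2 (here
   [tri l]), for sqrt N (log N)^2 < |l| <= N/2, by an explicit sandwich.
   1. Decay of p: if 3J <= n <= J^2 then 2 p(n - 3J) <= p(n) (insert i parts j
      into partitions of n - ij and weigh by j <= J); iterating,
      2^(m / 3J) p(N - m) <= p(N) for m <= N <= J^2.
   2. Lower bound: partitions of N with at most l parts embed, via padding,
      reversal and the staircase 1..l, into compositions of N + T(l) of rank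
      l; those with L > l parts number <= p(N - L) (remove the first column).
   3. Upper bound: removing both staircases from a composition of rank l with
      centre index j and centre value c leaves j free letters and a
      nondecreasing list of weight N - d, with d >= (j + c) l.
   With J = floor(sqrt N) + 1, g = l / 3J, Q = 2^g / (N+1), decay turns 2 and
   3 into the natural-number sandwich  Q |V_d - p(N)| <= (N + T(l) + 1)^2 p(N)
   (module [ConcaveCompositions], on MathComp sequences); real estimates then
   show (N + T(l) + 1)^2 N^(sqrt(log N)) <= Q once log N >= 400, and the
   theorem follows with constant 1. *)

Module ConcaveCompositions.
Import ssreflect ssrfun ssrbool eqtype ssrnat seq path bigop div zify.
Set Implicit Arguments. Unset Strict Implicit. Unset Printing Implicit Defensive.

Lemma lengthE (T : Type) (l : list T) : List.length l = size l.
Proof. by elim: l => //= x l ->. Qed.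
Lemma mapE (A B : Type) (f : A -> B) l : List.map f l = map f l.
Proof. by elim: l => //= x l ->. Qed.
Lemma filterE (A : Type) (f : A -> bool) l : List.filter f l = filter f l.
Proof. by elim: l => //= x l ->. Qed.
Lemma flat_mapE (A B : Type) (f : A -> list B) l :
  List.flat_map f l = flatten (map f l).
Proof. by elim: l => //= x l ->. Qed.
Lemma seqE a n : List.seq a n = iota a n.
Proof. by elim: n a => //= n IH a; rewrite IH. Qed.
Lemma forallbE (A : Type) (f : A -> bool) l : forallb f l = all f l.
Proof. by elim: l => //= x l ->. Qed.
Lemma existsbE (A : Type) (f : A -> bool) l : existsb f l = has f l.
Proof. by elim: l => //= x l ->. Qed.
Lemma defs_sumnE l : Defs.sumn l = sumn l.
Proof. by elim: l => //= x l ->. Qed.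
Lemma nthE (A : Type) i (l : list A) d : List.nth i l d = nth d l i.
Proof. by elim: l i => [|x l IH] [|i] //=. Qed.
Lemma lebE a b : (a <=? b)%nat = (a <= b).
Proof. by apply/idP/idP => [/Nat.leb_le/leP|/leP/Nat.leb_le]. Qed.
Lemma ltbE a b : (a <? b)%nat = (a < b).
Proof. by apply/idP/idP => [/Nat.ltb_lt/ltP|/ltP/Nat.ltb_lt]. Qed.
Lemma eqbE a b : (a =? b)%nat = (a == b).
Proof. by apply/idP/idP => [/Nat.eqb_eq/eqP|/eqP/Nat.eqb_eq]. Qed.
Lemma powE a b : Nat.pow a b = expn a b.
Proof. by elim: b => //= b IH; rewrite IH expnS. Qed.

Lemma geq_trans : transitive geq.
Proof. by move=> y x z /= h1 h2; apply: leq_trans h2 h1. Qed.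
Lemma geq_anti : antisymmetric geq.
Proof. move=> x y /andP[/= h1 h2]; lia. Qed.
Lemma geq_total : total geq.
Proof. move=> x y /=; exact: leq_total. Qed.

Lemma size_le_inj (T1 T2 : eqType) (s1 : seq T1) (s2 : seq T2) (f : T1 -> T2) :
  uniq s1 -> {in s1 &, injective f} -> (forall x, x \in s1 -> f x \in s2) ->
  size s1 <= size s2.
Proof.
move=> u inj sub; rewrite -(size_map f); apply: uniq_leq_size.
  by rewrite map_inj_in_uniq.
by move=> y /mapP[x hx ->]; apply: sub.
Qed.

Lemma count_split (T0 : eqType) (P : pred T0) (f : T0 -> nat) B s :
  {in s, forall x, P x -> f x < B} ->
  count P s = \sum_(0 <= i < B) count (fun x => P x && (f x == i)) s.
Proof.
have sum_ind y : \sum_(0 <= i < B) (y == i) = (y < B).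
  elim: B {P s} => [|B IH]; first by rewrite big_geq.
  rewrite big_nat_recr // IH ltnS leq_eqVlt; case: (ltngtP y B) => //= h; lia.
elim: s => [|x s IH] H; first by rewrite big1.
rewrite /= big_split /= IH; last by move=> y hy; apply: H; rewrite inE hy orbT.
congr (_ + _); case hP: (P x) => /=; last by rewrite big1.
by rewrite sum_ind H // inE eqxx.
Qed.

Lemma size_le_sumn a : all (leq 1) a -> size a <= sumn a.
Proof. elim: a => //= x a IH /andP[h1 h2]; have := IH h2; lia. Qed.

Lemma all_le_sumn a : all (fun y => y <= sumn a) a.
Proof.
elim: a => //= x a IH; rewrite leq_addr /=.
by apply/allP => y hy; have := allP IH y hy; lia.
Qed.

Lemma sumn_filter_pos v : sumn (filter (leq 1) v) = sumn v.
Proof. by elim: v => //= x v IH; case: x => //= x; rewrite IH. Qed.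

Lemma sumn_map_le (T0 : Type) (s : seq T0) (f : T0 -> nat) B :
  (forall u, u \in map f s -> u <= B) -> sumn (map f s) <= size s * B.
Proof.
elim: s => //= x s IH H; rewrite mulSn; apply: leq_add.
  by apply: H; rewrite inE eqxx.
by apply: IH => u hu; apply: H; rewrite inE hu orbT.
Qed.

Lemma lists_of_lenS len b : lists_of_len len.+1 b =
  flatten [seq [seq x :: y | y <- lists_of_len len b] | x <- iota 0 b.+1].
Proof.
change (lists_of_len len.+1 b) with (List.flat_map
  (fun x => List.map (cons x) (lists_of_len len b)) (List.seq 0 b.+1)).
rewrite flat_mapE seqE; congr flatten; apply: eq_map => x; exact: mapE.
Qed.

Lemma mem_lists_of_len len b x :
  (x \in lists_of_len len b) = (size x == len) && all (fun y => y <= b) x.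
Proof.
elim: len x => [|len IH] x; first by case: x.
rewrite lists_of_lenS; apply/flattenP/idP.
- move=> [s /mapP[z]]; rewrite mem_iota add0n => hz -> /mapP[w].
  rewrite IH => /andP[/eqP hs ha] ->; rewrite /= eqSS hs eqxx /= ha andbT.
  by rewrite -ltnS.
- move=> /andP[hs ha]; case: x hs ha => [|y x] // hs /andP[hy ha].
  exists [seq y :: w | w <- lists_of_len len b].
  + by apply/mapP; exists y => //; rewrite mem_iota add0n ltnS hy.
  + by apply/mapP; exists x => //; rewrite IH -eqSS hs; exact: ha.
Qed.

Lemma uniq_lists_of_len len b : uniq (lists_of_len len b).
Proof.
elim: len => [|len IH] //; rewrite lists_of_lenS.
elim: (iota 0 b.+1) (iota_uniq 0 b.+1) => //= z s IHs /andP[hz hs].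
rewrite cat_uniq IHs // andbT map_inj_uniq ?IH //=; last by move=> ? ? [].
apply/hasPn => w /flattenP[t /mapP[z' hz' ->]] /mapP[v _ ->].
by apply/mapP => -[v' _ [E _]]; move: hz; rewrite -E hz'.
Qed.

Lemma size_lists_of_len len b : size (lists_of_len len b) = b.+1 ^ len.
Proof.
elim: len => [|len IH] //; rewrite lists_of_lenS size_flatten /shape -map_comp.
rewrite (eq_map (g := fun _ => b.+1 ^ len)); last by move=> x /=; rewrite size_map IH.
have sumn_const (s : seq nat) c : sumn [seq c | _ <- s] = size s * c.
  by elim: s => //= x s ->; rewrite mulSn.
by rewrite sumn_const size_iota expnS.
Qed.

Lemma mem_lists_upto m b x :
  (x \in lists_upto m b) = (size x <= m) && all (fun y => y <= b) x.
Proof.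
rewrite /lists_upto flat_mapE seqE; apply/flattenP/idP.
- move=> [s /mapP[l]]; rewrite mem_iota add0n ltnS => /andP[_ hl] ->.
  by rewrite mem_lists_of_len => /andP[/eqP -> ->]; rewrite hl.
- move=> /andP[hs ha]; exists (lists_of_len (size x) b).
  + by apply/mapP; exists (size x); rewrite // mem_iota add0n ltnS.
  + by rewrite mem_lists_of_len eqxx.
Qed.

Lemma uniq_lists_upto m b : uniq (lists_upto m b).
Proof.
rewrite /lists_upto flat_mapE seqE.
elim: (iota 0 m.+1) (iota_uniq 0 m.+1) => //= z s IHs /andP[hz hs].
rewrite cat_uniq IHs // andbT uniq_lists_of_len /=.
apply/hasPn => w /flattenP[t /mapP[z' hz' ->]]; rewrite !mem_lists_of_len.
move=> /andP[/eqP h1 _]; apply/negP => /andP[/eqP h2 _].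
by move: hz; rewrite -h2 h1 hz'.
Qed.

Lemma mem_lists_upto_sumn a m b : size a <= m -> sumn a <= b -> a \in lists_upto m b.
Proof.
move=> h1 h2; rewrite mem_lists_upto h1 /=; apply/allP => y hy.
have := allP (all_le_sumn a) y hy; lia.
Qed.

Definition is_partition n (a : seq nat) :=
  (sumn a == n) && all (leq 1) a && sorted geq a.
Definition partitions n := filter (is_partition n) (lists_upto n n).

Lemma mem_partitions n a : (a \in partitions n) = is_partition n a.
Proof.
rewrite mem_filter; case h: (is_partition n a) => //=.
move: h => /andP[/andP[/eqP hs ha] _]; apply: mem_lists_upto_sumn; last by rewrite hs.
by rewrite -hs size_le_sumn.
Qed.

Lemma uniq_partitions n : uniq (partitions n).
Proof. exact/filter_uniq/uniq_lists_upto. Qed.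

Lemma pE n : p (Z.of_nat n) = size (partitions n).
Proof.
rewrite /p; have -> : (Z.of_nat n <? 0)%Z = false by apply/Z.ltb_ge; lia.
have nonincrE a : nonincr a = sorted geq a.
  by elim: a => // x [|y a] //= IH; rewrite IH lebE.
rewrite Nat2Z.id /part_count lengthE filterE /partitions; congr size.
apply: eq_filter => a; rewrite eqbE defs_sumnE forallbE nonincrE /is_partition.
by congr (_ && _ && _); apply: eq_all => x; rewrite lebE.
Qed.

(* p is nondecreasing: append a part 1. *)
Lemma partitions_succ n : size (partitions n) <= size (partitions n.+1).
Proof.
apply: (size_le_inj (f := fun a => rcons a 1)) => //; first exact: uniq_partitions.
  by move=> x y _ _; apply: rcons_injl.
move=> a; rewrite !mem_partitions /is_partition => /andP[/andP[/eqP hs ha] hso].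
rewrite -cats1 sumn_cat hs /= addn0 addn1 eqxx all_cat ha /=.
case: a ha hso {hs} => [|x a] //= ha hso.
rewrite cat_path hso /= andbT; move: ha => /andP[h1 /allP ha].
case: a ha {hso} => [|y a] ha //=.
by apply: ha; rewrite -/(last y a) mem_last.
Qed.

Lemma partitions_mono m n : m <= n -> size (partitions m) <= size (partitions n).
Proof.
elim: n => [|n IH]; first by rewrite leqn0 => /eqP ->.
rewrite leq_eqVlt => /orP[/eqP -> //|h].
exact: leq_trans (IH h) (partitions_succ n).
Qed.

(* Inserting i parts equal to j is injective: p(n - ij) is at most the number
   of partitions of n having at least i parts equal to j. *)
Lemma insert_parts n j i : 0 < j -> i * j <= n ->
  size (partitions (n - i * j))
  <= size (filter (fun a => i <= count_mem j a) (partitions n)).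
Proof.
move=> hj hij.
apply: (size_le_inj (f := fun a => sort geq (nseq i j ++ a))).
- exact: uniq_partitions.
- move=> x y; rewrite !mem_partitions => /andP[_ hx] /andP[_ hy] E.
  apply: (sorted_eq geq_trans geq_anti) => //.
  by rewrite -(perm_cat2l (nseq i j)) -(perm_sort geq) E (perm_sort geq).
- move=> a; rewrite mem_partitions mem_filter mem_partitions /is_partition.
  move=> /andP[/andP[/eqP hs ha] _].
  rewrite count_sort count_cat count_nseq /= eqxx mul1n leq_addr /=.
  rewrite (perm_sumn (permEl (perm_sort geq _))).
  rewrite (perm_all _ (permEl (perm_sort geq _))) sort_sorted ?andbT;
    last exact: geq_total.
  rewrite sumn_cat hs all_cat ha andbT sumn_nseq.
  apply/andP; split; first by apply/eqP; lia.
  by apply/allP => x /nseqP[-> _].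
Qed.

(* Layer-cake: summing the counts of [i <= f x] over 1 <= i <= B bounds the
   sum of f. *)
Lemma sum_count_ge_le (T0 : Type) (s : seq T0) (f : T0 -> nat) B :
  \sum_(1 <= i < B.+1) count (fun x => i <= f x) s <= \sum_(x <- s) f x.
Proof.
have minn_sum c : \sum_(1 <= i < B.+1) (i <= c) = minn B c.
  elim: B => [|B IH]; first by rewrite big_geq // min0n.
  rewrite big_nat_recr // IH; case: (leqP B.+1 c) => h /=; lia.
elim: s => [|x s IH]; first by rewrite big_nil big1.
rewrite big_cons /= big_split /= minn_sum.
by apply: leq_add => //; exact: geq_minr.
Qed.

Lemma weighted_count_le_sumn J a : \sum_(1 <= j < J.+1) j * count_mem j a <= sumn a.
Proof.
have one x : \sum_(1 <= j < J.+1) j * (x == j) <= x.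
  elim: J => [|J IH]; first by rewrite big_geq.
  rewrite big_nat_recr //; case: (eqVneq x J.+1) => [->|hne].
  - have -> : \sum_(1 <= j < J.+1) j * (J.+1 == j) = 0.
      rewrite big_nat big1 // => j /andP[_ hj].
      have -> : (J.+1 == j) = false by apply/eqP; lia.
      by rewrite muln0.
    by rewrite -[X in X <= _]/(addn 0 (J.+1 * true)) add0n muln1.
  - by rewrite -[X in X <= _]/(addn _ (J.+1 * false)) muln0 addn0.
elim: a => [|x a IH]; first by rewrite big1 // => j _; rewrite muln0.
rewrite /= (eq_bigr (fun j => j * (x == j) + j * count_mem j a)).
  by rewrite big_split /=; apply: leq_add.
by move=> j _; rewrite mulnDr.
Qed.

(* Each value 1 <= j <= K occurs, in total over all partitions of n, at least
   (K / j) p(n - K) times: for each i <= K / j, insertion of i parts j. *)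
Lemma total_count_ge n K j : 0 < j -> K <= n ->
  (K %/ j) * size (partitions (n - K)) <= \sum_(a <- partitions n) count_mem j a.
Proof.
move=> hj hK; set q := size (partitions (n - K)).
apply: leq_trans (sum_count_ge_le (partitions n) (fun a => count_mem j a) (K %/ j)).
have -> : (K %/ j) * q = \sum_(1 <= i < (K %/ j).+1) q.
  by rewrite sum_nat_const_nat subn1.
rewrite big_nat [X in _ <= X]big_nat; apply: leq_sum => i /andP[hi1 hi2].
have hij : i * j <= K.
  by apply: leq_trans (leq_divM K j); rewrite leq_mul2r -ltnS hi2 orbT.
rewrite -size_filter; apply: leq_trans (insert_parts hj (leq_trans hij hK)).
apply: partitions_mono; lia.
Qed.

Lemma weighted_total_count_le n J :
  \sum_(1 <= j < J.+1) j * \sum_(a <- partitions n) count_mem j a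
  <= n * size (partitions n).
Proof.
rewrite (eq_bigr (fun j => \sum_(a <- partitions n) j * count_mem j a));
  last by move=> j _; rewrite big_distrr.
rewrite exchange_big /=.
apply: leq_trans (_ : \sum_(a <- partitions n) sumn a <= _).
  by apply: leq_sum => a _; exact: weighted_count_le_sumn.
rewrite big_seq_cond (eq_bigr (fun _ => n)).
  by rewrite -big_seq_cond big_const_seq count_predT iter_addn_0 mulnC.
by move=> a /andP[]; rewrite mem_partitions => /andP[/andP[/eqP]].
Qed.

(* For n <= J^2:  sum_(j <= J) j (3J / j) >= J (2J + 1) >= 2n. *)
Lemma weighted_quotient_sum_ge n J : n <= J * J ->
  2 * n <= \sum_(1 <= j < J.+1) j * (3 * J %/ j).
Proof.
move=> hJ; apply: leq_trans (_ : \sum_(1 <= j < J.+1) ((3 * J).+1 - J) <= _).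
  by rewrite sum_nat_const_nat subn1 /=; nia.
rewrite big_nat [X in _ <= X]big_nat; apply: leq_sum => j /andP[h1 h2].
have := divn_eq (3 * J) j; have := ltn_pmod (3 * J) h1; rewrite mulnC; lia.
Qed.

Lemma partitions_double n J : 0 < n -> n <= J * J -> 3 * J <= n ->
  2 * size (partitions (n - 3 * J)) <= size (partitions n).
Proof.
move=> n0 hJ hK; set q := size (partitions (n - 3 * J)).
have : 2 * n * q <= n * size (partitions n).
  apply: leq_trans (weighted_total_count_le n J).
  apply: leq_trans (leq_mul (weighted_quotient_sum_ge hJ) (leqnn q)) _.
  rewrite big_distrl /= big_nat [X in _ <= X]big_nat.
  apply: leq_sum => j /andP[h1 h2]; rewrite -mulnA leq_mul2l.
  by rewrite total_count_ge ?orbT.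
by move=> h; rewrite -(leq_pmul2l n0) mulnA (mulnC n 2).
Qed.

Lemma partitions_decay N J m : 0 < J -> N <= J * J -> m <= N ->
  2 ^ (m %/ (3 * J)) * size (partitions (N - m)) <= size (partitions N).
Proof.
move=> J0 hJ hm; set t := m %/ (3 * J).
have iter s : s * (3 * J) <= N ->
    2 ^ s * size (partitions (N - s * (3 * J))) <= size (partitions N).
  elim: s => [|s IH] hs; first by rewrite mul1n subn0.
  have hs' : s * (3 * J) <= N by rewrite mulSn in hs; lia.
  apply: leq_trans (IH hs'); rewrite expnS (mulnC 2) -mulnA leq_mul2l.
  apply/orP; right.
  have := @partitions_double (N - s * (3 * J)) J; rewrite mulSn.
  have -> : N - s * (3 * J) - 3 * J = N - (3 * J + s * (3 * J)) by lia.
  by apply; [|nia|]; rewrite mulSn in hs; lia.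
have ht : t * (3 * J) <= m by exact: leq_divM.
apply: leq_trans (iter t (leq_trans ht hm)).
by rewrite leq_mul2l; apply/orP; right; apply: partitions_mono; lia.
Qed.

Fixpoint stair k (v : seq nat) :=
  if v is y :: v' then (y + k.+1) :: stair k.+1 v' else [::].
Fixpoint unstair k (R : seq nat) :=
  if R is x :: R' then (x - k.+1) :: unstair k.+1 R' else [::].

Lemma size_stair k v : size (stair k v) = size v.
Proof. by elim: v k => //= x v IH k; rewrite IH. Qed.
Lemma size_unstair k R : size (unstair k R) = size R.
Proof. by elim: R k => //= x R IH k; rewrite IH. Qed.

Lemma stairK k v : unstair k (stair k v) = v.
Proof. by elim: v k => //= x v IH k; rewrite IH addnK. Qed.

Lemma unstairK k R : sorted ltn (k :: R) -> stair k (unstair k R) = R.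
Proof.
elim: R k => //= x R IH k /andP[h1 h2]; rewrite subnK // IH //.
case: R {IH} h2 => //= y R /andP[h3 h4]; rewrite h4 andbT; lia.
Qed.

Lemma unstair_sorted k R : sorted ltn (k :: R) -> sorted leq (unstair k R).
Proof.
elim: R k => //= x R IH k /andP[h1 h2].
case: R IH h2 => //= y R IH /andP[h3 h4]; rewrite -/(unstair k.+2 R).
have := IH k.+1; rewrite /= h4 andbT => ->; first by rewrite andbT; lia.
lia.
Qed.

Lemma stair_sorted k v : sorted leq v -> sorted ltn (k :: stair k v).
Proof.
elim: v k => //= x v IH k h; rewrite (_ : k < x + k.+1) /=; last lia.
have := IH k.+1 (path_sorted h); case: v {IH} h => //= y v /andP[h1 h2].
by move=> /andP[h3 h4]; rewrite h4 andbT; lia.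
Qed.

Definition tri r := sumn (iota 1 r).

Lemma sumn_iota_shift a b r : sumn (iota (a + b) r) = a * r + sumn (iota b r).
Proof.
elim: r a b => [|r IH] a b /=; first by rewrite muln0.
by rewrite -addnS IH mulnS; lia.
Qed.

Lemma tri_add a b : tri (a + b) = tri a + b * a + tri b.
Proof. by rewrite /tri iotaD sumn_cat addnC (addnC 1 a) sumn_iota_shift; lia. Qed.

Lemma tri_double r : 2 * tri r = r * r.+1.
Proof.
elim: r => [|r IH] //; have := tri_add r 1; rewrite addn1 => ->.
by rewrite (_ : tri 1 = 1) //; nia.
Qed.

Lemma sumn_stair k v : sumn (stair k v) = sumn v + (k * size v + tri (size v)).
Proof.
rewrite /tri -(sumn_iota_shift k 1) addn1.
by elim: v k => [|x v IH] k //=; rewrite IH /=; lia.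
Qed.

Lemma sumn_unstair k R :
  sorted ltn (k :: R) -> sumn R = sumn (unstair k R) + (k * size R + tri (size R)).
Proof. by move=> h; rewrite -{1}(unstairK h) sumn_stair size_unstair. Qed.

Definition gtr : rel nat := fun x y => y < x.

Lemma sc_atE a k : sc_at a k = [&& 1 <= k, k <= size a,
   all (fun i => nth 0 a i < nth 0 a i.-1) (iota 1 k.-1) &
   all (fun i => nth 0 a i.-1 < nth 0 a i) (iota k (size a - k))].
Proof.
rewrite /sc_at lengthE !lebE !forallbE !seqE -!andbA; congr [&& _, _, _ & _].
- rewrite (_ : (k - 1)%coq_nat = k.-1); last by lia.
  apply: eq_all => i; rewrite /a_at !nthE ltbE; congr (nth 0 a _ < nth 0 a _); lia.
- rewrite (_ : (size a - k)%coq_nat = size a - k) //.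
  apply: eq_all => i; rewrite /a_at !nthE ltbE; congr (nth 0 a _ < nth 0 a _); lia.
Qed.

Lemma left_sortedE a j : j < size a ->
  all (fun i => nth 0 a i < nth 0 a i.-1) (iota 1 j) = sorted gtr (take j.+1 a).
Proof.
move=> hj; apply/allP/(sortedP 0).
- move=> H i hi; have hi' : i.+1 < j.+1.
    by move: hi; rewrite size_take; case: ifP; lia.
  rewrite !nth_take /gtr; try lia.
  by have := H i.+1; rewrite mem_iota; apply; lia.
- move=> H i; rewrite mem_iota => /andP[h1 h2].
  have := H i.-1; rewrite !nth_take /gtr; try lia; rewrite prednK //; apply.
  by rewrite size_take; case: ifP; lia.
Qed.

Lemma right_sortedE a j : j < size a ->
  all (fun i => nth 0 a i.-1 < nth 0 a i) (iota j.+1 (size a - j.+1))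
  = sorted ltn (drop j a).
Proof.
move=> hj; apply/allP/(sortedP 0).
- move=> H i; rewrite size_drop => hi; rewrite !nth_drop.
  by have := H (j + i).+1; rewrite mem_iota /= addnS; apply; lia.
- move=> H i; rewrite mem_iota => /andP[h1 h2].
  have := H (i - j.+1); rewrite size_drop !nth_drop.
  rewrite (_ : j + (i - j.+1) = i.-1); last lia.
  by rewrite (_ : j + (i - j.+1).+1 = i); [apply; lia | lia].
Qed.

Lemma sc_rank_elim a m : sc_rank a m -> exists j, [/\ j < size a,
  sorted gtr (take j.+1 a), sorted ltn (drop j a) &
  (Z.of_nat (size a) - 2 * Z.of_nat j.+1 + 1)%Z = m].
Proof.
rewrite /sc_rank existsbE seqE lengthE => /hasP[k]; rewrite mem_iota.
move=> /andP[hk1 hk2]; rewrite sc_atE => /andP[/and4P[_ _ hl hr] /Z.eqb_eq hz].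
have hj : k.-1 < size a by lia.
exists k.-1; split => //.
- by rewrite -(left_sortedE hj).
- by rewrite -(right_sortedE hj) prednK.
- by rewrite prednK.
Qed.

Lemma sc_rank_intro a m j : j < size a ->
  sorted gtr (take j.+1 a) -> sorted ltn (drop j a) ->
  (Z.of_nat (size a) - 2 * Z.of_nat j.+1 + 1)%Z = m -> sc_rank a m.
Proof.
move=> hj hl hr hz; rewrite /sc_rank existsbE seqE lengthE; apply/hasP.
exists j.+1; first by rewrite mem_iota; lia.
rewrite sc_atE /= hj (left_sortedE hj) hl (right_sortedE hj) hr /=.
exact/Z.eqb_eq.
Qed.

Lemma sc_rank_arms a m : sc_rank a m -> exists j, [/\ j < size a,
  sorted ltn (nth 0 a j :: rev (take j a)), sorted ltn (nth 0 a j :: drop j.+1 a) &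
  (Z.of_nat (size a) - 2 * Z.of_nat j.+1 + 1)%Z = m].
Proof.
move/sc_rank_elim => [j [hj hl hr hz]]; exists j; split => //.
- by rewrite -rev_rcons rev_sorted -take_nth.
- by rewrite -drop_nth.
Qed.

Lemma split_at_nth a j : j < size a -> a = take j a ++ nth 0 a j :: drop j.+1 a.
Proof. by move=> hj; rewrite -drop_nth // cat_take_drop. Qed.

(* Only the centre of a strongly concave composition can vanish. *)
Lemma sc_rank_size a m : sc_rank a m -> size a <= (sumn a).+1.
Proof.
move/sc_rank_arms => [j [hj hl hr _]].
have p1 := order_path_min ltn_trans hl; have p2 := order_path_min ltn_trans hr.
have a1 : all (leq 1) (rev (take j a)) by apply: sub_all p1 => x /=; lia.
have a2 : all (leq 1) (drop j.+1 a) by apply: sub_all p2 => x /=; lia.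
have s1 := size_le_sumn a1; have s2 := size_le_sumn a2.
rewrite size_rev sumn_rev in s1; rewrite (split_at_nth hj) size_cat sumn_cat /=; lia.
Qed.

Definition is_sc_comp (m : Z) n (a : seq nat) :=
  (1 <= size a) && (sumn a == n) && sc_rank a m.
Definition sc_comps m n := filter (is_sc_comp m n) (lists_upto n.+1 n).

Lemma V_dE m n : V_d m n = size (sc_comps m n).
Proof.
rewrite /V_d lengthE filterE /sc_comps; congr size; apply: eq_filter => a.
by rewrite lebE lengthE eqbE defs_sumnE.
Qed.

Lemma mem_sc_comps m n a : (a \in sc_comps m n) = is_sc_comp m n a.
Proof.
rewrite mem_filter; case h: (is_sc_comp m n a) => //=.
move: h => /andP[/andP[h1 /eqP hs] hsc].
apply: mem_lists_upto_sumn; last by rewrite hs.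
by rewrite -hs; exact: sc_rank_size hsc.
Qed.

Lemma sc_rank_rev (a : seq nat) m : sc_rank a m -> sc_rank (rev a) (- m).
Proof.
move=> /sc_rank_elim[j [hj hl hr hz]].
apply: (sc_rank_intro (j := size a - j.+1)); rewrite ?size_rev.
- lia.
- rewrite take_rev (_ : size a - (size a - j.+1).+1 = j); last lia.
  by rewrite rev_sorted.
- rewrite drop_rev (_ : size a - (size a - j.+1) = j.+1); last lia.
  by rewrite rev_sorted.
- rewrite -hz; lia.
Qed.

Lemma sc_comps_opp m n : size (sc_comps m n) <= size (sc_comps (- m) n).
Proof.
apply: (size_le_inj (f := @rev nat)); first exact/filter_uniq/uniq_lists_upto.
  by move=> x y _ _ /(congr1 rev); rewrite !revK.
move=> a; rewrite !mem_sc_comps /is_sc_comp size_rev sumn_rev.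
by move=> /andP[/andP[-> ->] /sc_rank_rev].
Qed.

Lemma V_d_abs m n : V_d m n = V_d (Z.of_nat (Z.abs_nat m)) n.
Proof.
rewrite Zabs2Nat.id_abs; case: (Z.le_gt_cases 0 m) => h; first by rewrite Z.abs_eq.
rewrite Z.abs_neq; last lia.
rewrite !V_dE; apply/eqP; rewrite eqn_leq sc_comps_opp /=.
by have := sc_comps_opp (- m) n; rewrite Z.opp_involutive.
Qed.

Lemma sorted_geq_zero_split w :
  sorted geq w -> w = filter (leq 1) w ++ nseq (count_mem 0 w) 0.
Proof.
elim: w => //= x w IH hs; case: x hs => [|x] hs /=.
- have /allP H := order_path_min geq_trans hs.
  have : all (pred1 0) w by apply/allP => y /H /=; rewrite leqn0.
  by move/all_pred1P => E; rewrite E filter_nseq count_nseq /= add0n mul1n.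
- by rewrite add0n {1}(IH (path_sorted hs)).
Qed.

Lemma sorted_geq_eq w1 w2 : sorted geq w1 -> sorted geq w2 -> size w1 = size w2 ->
  filter (leq 1) w1 = filter (leq 1) w2 -> w1 = w2.
Proof.
have count0E w : count_mem 0 w = size w - size (filter (leq 1) w).
  rewrite size_filter -(count_predC (leq 1) w) addnC addnK.
  by apply: eq_count => x /=; rewrite eqn0Ngt.
move=> h1 h2 hs hf.
by rewrite (sorted_geq_zero_split h1) (sorted_geq_zero_split h2) !count0E hs hf.
Qed.

(* Nondecreasing lists of length r and weight M are at most p(M): reverse
   and drop the zeros. *)
Lemma nondecreasing_lists_le r M B : size (filter
    (fun v => sorted leq v && (size v == r) && (sumn v == M)) (lists_upto r B))
  <= size (partitions M).
Proof.
apply: (size_le_inj (f := fun v => rev (filter (leq 1) v))).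
- exact/filter_uniq/uniq_lists_upto.
- move=> x y; rewrite !mem_filter => /andP[/andP[/andP[hx1 /eqP hx2] _] _].
  move=> /andP[/andP[/andP[hy1 /eqP hy2] _] _] /(congr1 rev); rewrite !revK => E.
  rewrite -(revK x) -(revK y); congr rev; apply: sorted_geq_eq.
  + by rewrite rev_sorted.
  + by rewrite rev_sorted.
  + by rewrite !size_rev hx2 hy2.
  + by rewrite !filter_rev E.
- move=> v; rewrite mem_filter mem_partitions => /andP[/andP[/andP[h1 _] /eqP h3] _].
  rewrite /is_partition sumn_rev sumn_filter_pos h3 eqxx all_rev filter_all /=.
  by rewrite rev_sorted; exact: sorted_filter leq_trans _ _ h1.
Qed.

(* Partitions of N with exactly L parts are at most p(N - L): subtract 1
   from every part (remove the first column). *)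
Lemma partitions_of_length N L :
  size (filter (fun a => size a == L) (partitions N)) <= size (partitions (N - L)).
Proof.
have sumn_pred a : all (leq 1) a -> sumn (map predn a) + size a = sumn a.
  by elim: a => //= x a IH /andP[h1 h2]; have := IH h2; lia.
have predK a : all (leq 1) a -> a = map succn (map predn a).
  move=> /allP ha; rewrite -map_comp -[LHS]map_id.
  by apply/eq_in_map => z /ha /= hz; rewrite prednK.
have pred_sorted a : sorted geq a -> sorted geq (map predn a).
  by move=> h; rewrite sorted_map; apply: sub_sorted h => u w /= h'; lia.
apply: (size_le_inj (f := fun a => filter (leq 1) (map predn a))).
- exact/filter_uniq/uniq_partitions.
- move=> x y; rewrite mem_filter mem_partitions => /andP[/eqP hx /andP[/andP[_ ax] sx]].
  rewrite mem_filter mem_partitions => /andP[/eqP hy /andP[/andP[_ ay] sy]] E.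
  rewrite (predK _ ax) (predK _ ay); congr map.
  by apply: sorted_geq_eq; rewrite ?pred_sorted // !size_map hx hy.
- move=> a; rewrite mem_filter mem_partitions.
  move=> /andP[/eqP hs /andP[/andP[/eqP hsum ha] hso]].
  rewrite mem_partitions /is_partition sumn_filter_pos filter_all /=.
  apply/andP; split; first by apply/eqP; have := sumn_pred _ ha; lia.
  exact/sorted_filter/pred_sorted/hso/geq_trans.
Qed.

Definition sc_of_partition l (a : seq nat) :=
  0 :: stair 0 (rev (a ++ nseq (l - size a) 0)).

Lemma short_partitions_le_V l N :
  size (filter (fun a => size a <= l) (partitions N))
  <= size (sc_comps (Z.of_nat l) (N + tri l)).
Proof.
have pad_sorted (a : seq nat) k : sorted geq a -> sorted geq (a ++ nseq k 0).
  have zeros x : path geq x (nseq k 0).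
    by elim: k x {a} => //= k' IH x; rewrite IH andbT.
  case: a => [|x a] /= h; first by case: k zeros => //= k' zeros; exact: zeros.
  by rewrite cat_path h zeros.
have pos_pad (x : seq nat) k :
    all (leq 1) x -> filter (leq 1) (rev (x ++ nseq k 0)) = rev x.
  move=> ax; rewrite filter_rev filter_cat filter_nseq mul0n cats0.
  by move/all_filterP: ax => ->.
apply: (size_le_inj (f := sc_of_partition l)).
- exact/filter_uniq/uniq_partitions.
- move=> x y; rewrite mem_filter mem_partitions => /andP[_ /andP[/andP[_ ax] _]].
  rewrite mem_filter mem_partitions => /andP[_ /andP[/andP[_ ay] _]].
  move=> [] /(congr1 (unstair 0)); rewrite !stairK => /(congr1 (filter (leq 1))).
  by rewrite !pos_pad // => /(congr1 rev); rewrite !revK.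
- move=> a; rewrite mem_filter mem_partitions.
  move=> /andP[hl /andP[/andP[/eqP hs ha] hso]].
  have sz : size (rev (a ++ nseq (l - size a) 0)) = l.
    by rewrite size_rev size_cat size_nseq subnKC.
  rewrite mem_sc_comps /is_sc_comp /sc_of_partition /= sumn_stair sz sumn_rev.
  rewrite sumn_cat sumn_nseq hs mul0n add0n addn0 eqxx /=.
  apply: (sc_rank_intro (j := 0)); first by [].
  + by rewrite /= take0.
  + by rewrite drop0; apply: stair_sorted; rewrite rev_sorted; exact: pad_sorted.
  + by rewrite [size _]/= size_stair sz; lia.
Qed.

Lemma V_lower l N : size (partitions N) <= size (sc_comps (Z.of_nat l) (N + tri l))
  + \sum_(0 <= L < N.+1) (l < L) * size (partitions (N - L)).
Proof.
rewrite -(count_predC (fun a => size a <= l) (partitions N)); apply: leq_add.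
  by rewrite -size_filter; exact: short_partitions_le_V.
rewrite (count_split (f := fun a => size a) (B := N.+1)); last first.
  move=> a; rewrite mem_partitions => /andP[/andP[/eqP hs ha] _] _.
  by rewrite ltnS -hs; apply: size_le_sumn.
rewrite big_nat [X in _ <= X]big_nat; apply: leq_sum => L _.
case: (ltnP l L) => hL.
  rewrite mul1n; apply: leq_trans (partitions_of_length N L); rewrite size_filter.
  by apply: sub_count => a /andP[].
rewrite mul0n leqn0; apply/eqP/eqP; rewrite eqn0Ngt -has_count.
by apply/hasPn => a _; apply/negP => /andP[/= h1 /eqP h2]; lia.
Qed.

(* A composition of N + tri l of rank l has size l + 2j + 1,
   where j is its (0-based) centre index; call c its centre value.  Removing
   the staircases c+1, c+2, ... from both arms leaves a word x = u ++ v with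
   |u| = j and v nondecreasing of length l + j; the weight removed is
   [core_weight l j c] >= (j + c) l. *)
Definition core_weight l j c := c + c * j + c * (l + j) + j * l + 2 * tri j.

Lemma core_weight_ge l j c : (j + c) * l <= core_weight l j c.
Proof. rewrite /core_weight; nia. Qed.

Definition unstair_arms j c (a : seq nat) :=
  unstair c (rev (take j a)) ++ unstair c (drop j.+1 a).

Lemma unstair_arms_spec (l N j c : nat) (a : seq nat) :
  is_sc_comp (Z.of_nat l) (N + tri l) a ->
  (size a - l.+1) %/ 2 = j -> nth 0 a j = c ->
  let x := unstair_arms j c a in
  [/\ size x = j + (l + j), sorted leq (drop j x),
      sumn x + core_weight l j c = N &
      a = rev (stair c (take j x)) ++ c :: stair c (drop j x)].
Proof.
move=> /andP[/andP[h1 /eqP hs] /sc_rank_arms[j' [hj hl hr hz]]] hj2 hc x.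
have hsz : size a = l + 2 * j' + 1 by lia.
have ej : j' = j by rewrite -hj2 hsz; lia.
subst j'; rewrite hc in hl hr.
have sL : size (take j a) = j by rewrite size_takel //; lia.
have sR : size (drop j.+1 a) = l + j by rewrite size_drop; lia.
have tx : take j x = unstair c (rev (take j a)).
  by rewrite take_size_cat // size_unstair size_rev.
have dx : drop j x = unstair c (drop j.+1 a).
  by rewrite drop_size_cat // size_unstair size_rev.
split.
- by rewrite size_cat !size_unstair size_rev sL sR.
- by rewrite dx; apply: unstair_sorted.
- have e1 := sumn_unstair hl; have e2 := sumn_unstair hr.
  rewrite size_rev sL sumn_rev in e1; rewrite sR tri_add in e2.
  have e3 : sumn a = sumn (take j a) + c + sumn (drop j.+1 a).
    by rewrite {1}(split_at_nth hj) sumn_cat /= hc; lia.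
  rewrite sumn_cat /core_weight; rewrite hs in e3; rewrite mulnDr in e2 *; lia.
- by rewrite tx dx (unstairK hl) (unstairK hr) revK -hc -split_at_nth.
Qed.

Definition centred l N j c (a : seq nat) := is_sc_comp (Z.of_nat l) (N + tri l) a &&
  ((size a - l.+1) %/ 2 == j) && (nth 0 a j == c).

Definition right_parts l N j c (u : seq nat) :=
  filter (fun v => sorted leq v && (size v == l + j) &&
    (sumn v == N - core_weight l j c - sumn u)) (lists_upto (l + j) N).

Lemma centred_le_words l N j c : core_weight l j c <= N ->
  size (filter (centred l N j c) (lists_upto (N + tri l).+1 (N + tri l)))
  <= size [seq u ++ v | u <- lists_of_len j N, v <- right_parts l N j c u].
Proof.
move=> hd; apply: (size_le_inj (f := unstair_arms j c)).
- exact/filter_uniq/uniq_lists_upto.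
- move=> a b; rewrite !mem_filter => /andP[/andP[/andP[ha e1] /eqP e2] _].
  move=> /andP[/andP[/andP[hb e3] /eqP e4] _] E.
  have [_ _ _ ->] := unstair_arms_spec ha (eqP e1) e2.
  have [_ _ _ ->] := unstair_arms_spec hb (eqP e3) e4.
  by rewrite E.
- move=> a; rewrite mem_filter => /andP[/andP[/andP[ha /eqP e1] /eqP e2] _].
  have [h1 h2 h3 _] := unstair_arms_spec ha e1 e2.
  set x := unstair_arms j c a in h1 h2 h3 *.
  have e : sumn x = sumn (take j x) + sumn (drop j x).
    by rewrite -sumn_cat cat_take_drop.
  apply/allpairsPdep; exists (take j x), (drop j x).
  split; last by rewrite cat_take_drop.
  + rewrite mem_lists_of_len size_takel ?h1 ?leq_addr // eqxx /=.
    apply/allP => y /mem_take hy; have := allP (all_le_sumn x) y hy; lia.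
  + rewrite mem_filter h2 size_drop h1 /=.
    apply/andP; split; first by apply/andP; split; apply/eqP; lia.
    by apply: mem_lists_upto_sumn; rewrite ?size_drop ?h1; lia.
Qed.

(* Counting the words: (N+1)^j left parts, each with at most p(N - d) right
   parts. *)
Lemma centred_upper l N j c :
  size (filter (centred l N j c) (lists_upto (N + tri l).+1 (N + tri l)))
  <= (core_weight l j c <= N) * (N.+1 ^ j * size (partitions (N - core_weight l j c))).
Proof.
case: (leqP (core_weight l j c) N) => hd; last first.
  rewrite mul0n leqn0 size_filter; apply/eqP/eqP; rewrite eqn0Ngt -has_count.
  apply/hasPn => a _; apply/negP => /andP[/andP[hq /eqP e1] /eqP e2].
  by have [_ _ hs _] := unstair_arms_spec hq e1 e2; lia.
rewrite mul1n; apply: leq_trans (centred_le_words hd) _.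
rewrite size_allpairs_dep -(size_lists_of_len j N).
apply: sumn_map_le => s /mapP[u hu ->].
apply: leq_trans (nondecreasing_lists_le _ _ _) _.
exact/partitions_mono/leq_subr.
Qed.

Lemma V_upper l N : size (sc_comps (Z.of_nat l) (N + tri l))
  <= \sum_(0 <= j < (N + tri l).+1) \sum_(0 <= c < (N + tri l).+1)
     (core_weight l j c <= N) * (N.+1 ^ j * size (partitions (N - core_weight l j c))).
Proof.
set n := N + tri l; rewrite /sc_comps size_filter.
rewrite (count_split (f := fun a => (size a - l.+1) %/ 2) (B := n.+1)); last first.
  move=> a; rewrite mem_lists_upto => /andP[hs _] _.
  by have := leq_div (size a - l.+1) 2; lia.
rewrite big_nat [X in _ <= X]big_nat; apply: leq_sum => j _.
rewrite (count_split (f := fun a => nth 0 a j) (B := n.+1)); last first.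
  move=> a; rewrite mem_lists_upto => /andP[_ /allP ha] _.
  case: (ltnP j (size a)) => hj; last by rewrite nth_default.
  by rewrite ltnS; apply: ha; apply: mem_nth.
rewrite big_nat [X in _ <= X]big_nat; apply: leq_sum => c _.
by rewrite -size_filter; exact: centred_upper.
Qed.

(* Fix J with N <= J^2 and Q with
   (N+1) Q <= 2^(l / 3J).  By decay, every term of V_upper other than
   (j, c) = (0, 0) is at most p(N) / Q, and so is every term of V_lower. *)

(* The (N+1)^j left parts are paid for by j of the j + c factors 2^g. *)
Lemma pow_bound (N Q g j c : nat) : 0 < j + c -> N.+1 * Q <= 2 ^ g ->
  Q * N.+1 ^ j <= 2 ^ ((j + c) * g).
Proof.
move=> hjc hQ; case: (posnP Q) => [->|Q0]; first by rewrite mul0n.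
rewrite (mulnC (j + c)) expnM.
apply: leq_trans (_ : (N.+1 * Q) ^ (j + c) <= _); last by rewrite leq_exp2r.
rewrite expnMn expnD -mulnA (mulnC Q) leq_mul2l; apply/orP; right.
apply: leq_trans (_ : Q ^ (j + c) <= _); last by rewrite leq_pmull // expn_gt0.
by rewrite -{1}(expn1 Q) leq_pexp2l.
Qed.

Lemma upper_term_bound l N J Q j c : 0 < J -> N <= J * J ->
  N.+1 * Q <= 2 ^ (l %/ (3 * J)) ->
  Q * ((core_weight l j c <= N) * (N.+1 ^ j * size (partitions (N - core_weight l j c))))
  <= (j == 0) * (c == 0) * Q * size (partitions N) + size (partitions N).
Proof.
move=> J0 hJ hQ; have [hjc|hjc] := posnP (j + c).
  have -> : j = 0 by lia.
  have -> : c = 0 by lia.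
  by rewrite /core_weight /= !muln0 /= addn0 !mul1n subn0 leq_addr.
apply: leq_trans (leq_addl _ _).
case: (leqP (core_weight l j c) N) => hd; last by rewrite mul0n muln0.
rewrite mul1n mulnA; apply: leq_trans (partitions_decay J0 hJ hd).
rewrite leq_mul2r; apply/orP; right.
apply: leq_trans (pow_bound hjc hQ) _; apply: leq_pexp2l => //.
rewrite leq_divRL; last lia.
apply: leq_trans (core_weight_ge l j c); rewrite -mulnA leq_mul2l; apply/orP; right.
exact: leq_divM.
Qed.

Lemma sum_delta B X : 0 < B -> \sum_(0 <= i < B) (i == 0) * X = X.
Proof. by case: B => // B _; rewrite big_nat_recl // big1 ?addn0 ?mul1n. Qed.

Lemma V_upper_scaled l N J Q : 0 < J -> N <= J * J -> N.+1 * Q <= 2 ^ (l %/ (3 * J)) ->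
  Q * size (sc_comps (Z.of_nat l) (N + tri l))
  <= Q * size (partitions N) + (N + tri l).+1 ^ 2 * size (partitions N).
Proof.
move=> J0 hJ hQ; set n := N + tri l; set P := size (partitions N).
apply: leq_trans (leq_mul (leqnn Q) (V_upper l N)) _.
rewrite big_distrr /=.
apply: leq_trans (_ : \sum_(0 <= j < n.+1) \sum_(0 <= c < n.+1)
     ((j == 0) * (c == 0) * Q * P + P) <= _).
  rewrite big_nat [X in _ <= X]big_nat; apply: leq_sum => j _.
  rewrite big_distrr /= big_nat [X in _ <= X]big_nat; apply: leq_sum => c _.
  exact: (upper_term_bound j c J0 hJ hQ).
apply: leq_trans (_ : \sum_(0 <= j < n.+1) ((j == 0) * (Q * P) + n.+1 * P) <= _).
  rewrite big_nat [X in _ <= X]big_nat; apply: leq_sum => j _.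
  rewrite big_split /= sum_nat_const_nat subn0 leq_add2r.
  apply: leq_trans (_ : \sum_(0 <= c < n.+1) (c == 0) * ((j == 0) * (Q * P)) <= _).
    rewrite big_nat [X in _ <= X]big_nat; apply: leq_sum => c _.
    by rewrite (mulnC (j == 0)) -!mulnA.
  by rewrite sum_delta.
by rewrite big_split /= sum_delta // sum_nat_const_nat subn0 expnS expn1 mulnA.
Qed.

(* Q p(N) <= Q V_d + (n+1)^2 p(N): each p(N - L), L > l, is <= p(N) / Q. *)
Lemma V_lower_scaled l N J Q : 0 < J -> N <= J * J -> N.+1 * Q <= 2 ^ (l %/ (3 * J)) ->
  Q * size (partitions N)
  <= Q * size (sc_comps (Z.of_nat l) (N + tri l)) + (N + tri l).+1 ^ 2 * size (partitions N).
Proof.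
move=> J0 hJ hQ; set n := N + tri l; set P := size (partitions N).
apply: leq_trans (leq_mul (leqnn Q) (V_lower l N)) _; rewrite mulnDr leq_add2l.
apply: leq_trans (_ : N.+1 * P <= _); last first.
  by rewrite leq_mul2r; apply/orP; right; rewrite expnS expn1; nia.
rewrite big_distrr /= -(subn0 N.+1) -sum_nat_const_nat big_nat [X in _ <= X]big_nat.
apply: leq_sum => L /andP[_ hL].
case: (ltnP l L) => hlL; last by rewrite mul0n muln0.
rewrite mul1n; have hLN : L <= N by lia.
apply: leq_trans (partitions_decay J0 hJ hLN); rewrite leq_mul2r; apply/orP; right.
apply: leq_trans (_ : 2 ^ (l %/ (3 * J)) <= _).
  by apply: leq_trans hQ; apply: leq_pmull.
by apply: leq_pexp2l => //; apply: leq_div2r; apply: ltnW.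
Qed.

(* The sandwich, stated with Peano arithmetic for use over the reals:
   Q |V_d(l, N + tri l) - p(N)| <= (N + tri l + 1)^2 p(N). *)
Lemma V_sandwich l N J g Q : (0 < J)%coq_nat -> (N <= J * J)%coq_nat ->
  (g * (3 * J) <= l)%coq_nat -> (S N * Q <= Nat.pow 2 g)%coq_nat ->
  (Q * V_d (Z.of_nat l) (N + tri l)
     <= Q * p (Z.of_nat N) + Nat.pow (S (N + tri l)) 2 * p (Z.of_nat N))%coq_nat /\
  (Q * p (Z.of_nat N)
     <= Q * V_d (Z.of_nat l) (N + tri l) + Nat.pow (S (N + tri l)) 2 * p (Z.of_nat N))%coq_nat.
Proof.
move=> /ltP J0 /leP hJ /leP hg /leP hQ; rewrite !powE in hQ *.
have hQ' : N.+1 * Q <= 2 ^ (l %/ (3 * J)).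
  by apply: leq_trans hQ _; apply: leq_pexp2l => //; rewrite leq_divRL //; lia.
rewrite V_dE pE; split; apply/leP.
- exact: V_upper_scaled hQ'.
- exact: V_lower_scaled hQ'.
Qed.

Lemma tri_double_nat r : (2 * tri r = r * S r)%coq_nat.
Proof. exact: tri_double. Qed.

End ConcaveCompositions.

Open Scope R_scope.

Lemma exp_mono x y : x <= y -> exp x <= exp y.
Proof. intros [h|h]; [left; apply exp_increasing; lra | subst; lra]. Qed.

(* exp (1/2) < 2, since exp 1 <= 3 < 4. *)
Lemma ln2_ge : / 2 <= ln 2.
Proof.
assert (H : exp (/ 2) < 2).
{ assert (E : exp (/2) * exp (/2) = exp 1) by (rewrite <- exp_plus; f_equal; lra).
  assert (P : 0 < exp (/2)) by apply exp_pos.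
  pose proof exp_le_3. nra. }
rewrite <- (ln_exp (/2)); left; apply ln_increasing; [apply exp_pos | exact H].
Qed.

Lemma pow2_ge_exp (g : nat) : exp (INR g / 2) <= 2 ^ g.
Proof.
rewrite <- (exp_ln (2 ^ g)) by (apply pow_lt; lra).
rewrite ln_pow by lra.
apply exp_mono; pose proof ln2_ge; pose proof (pos_INR g); nra.
Qed.

Lemma exp_pow_nat a n : exp a ^ n = exp (INR n * a).
Proof.
induction n as [|n IH]; simpl pow.
- simpl; rewrite Rmult_0_l, exp_0; lra.
- rewrite IH, <- exp_plus, S_INR; f_equal; ring.
Qed.

Lemma succ_le_exp x : 1 <= x -> x + 1 <= exp (ln x + 1).
Proof.
intros h; rewrite exp_plus, exp_ln by lra.
pose proof (exp_ineq1_le 1); nra.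
Qed.

Lemma ln_threshold (N : nat) : (3 ^ 400 <= N)%nat -> 400 <= ln (INR N).
Proof.
intros h; apply le_INR in h; rewrite pow_INR in h.
assert (h3 : 1 <= ln (INR 3)).
{ rewrite <- (ln_exp 1); simpl INR.
  destruct (Rle_lt_dec (1+1+1) (exp 1)) as [a|a].
  - pose proof exp_le_3. replace (exp 1) with (1+1+1) by lra; lra.
  - left; apply ln_increasing; [apply exp_pos|lra]. }
assert (hp : 0 < INR 3 ^ 400) by (apply pow_lt; simpl; lra).
assert (l1 : ln (INR 3 ^ 400) <= ln (INR N)).
{ destruct h as [h|h]; [left; apply ln_increasing; lra | rewrite h; lra]. }
rewrite ln_pow in l1 by (simpl; lra).
assert (INR 400 = 400) by (rewrite INR_IZR_INZ; reflexivity).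
nra.
Qed.

Lemma exponent_budget u : 400 <= u -> 1 + 5 * (u + 1) + u * sqrt u <= u * u / 12 - / 2.
Proof.
intros h.
assert (s : sqrt u <= u / 20).
{ rewrite <- (sqrt_square (u / 20)) by lra. apply sqrt_le_1_alt; nra. }
assert (u * sqrt u <= u * (u / 20)) by (apply Rmult_le_compat_l; lra).
nra.
Qed.

Lemma pow2_beats_error (x M : R) (g Q : nat) : 1 <= x -> 400 <= ln x ->
  ln x * ln x / 6 <= INR g + 1 -> 0 <= M -> M <= (x + 1) ^ 4 ->
  2 ^ g < (x + 1) * (INR Q + 1) -> M * exp (ln x * sqrt (ln x)) <= INR Q.
Proof.
intros hx hu hg hM0 hM hQ.
set (u := ln x) in *. set (e := exp (u * sqrt u)).
assert (he : 1 <= e).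
{ unfold e; pose proof (exp_ineq1_le (u * sqrt u)).
  pose proof (sqrt_pos u). assert (0 <= u * sqrt u) by nra. lra. }
assert (h5 : (x + 1) ^ 5 <= exp (INR 5 * (u + 1))).
{ rewrite <- exp_pow_nat. apply pow_incr; split; [lra | apply succ_le_exp; exact hx]. }
assert (h2 : 2 <= exp 1) by (pose proof (exp_ineq1_le 1); lra).
assert (hchain : 2 * (x + 1) ^ 5 * e <= 2 ^ g).
{ apply Rle_trans with (exp 1 * exp (INR 5 * (u + 1)) * e).
  - apply Rmult_le_compat_r; [lra|]. apply Rmult_le_compat; try lra.
    apply pow_le; lra.
  - apply Rle_trans with (exp (INR g / 2)); [|apply pow2_ge_exp].
    unfold e; rewrite <- !exp_plus; apply exp_mono.
    pose proof (exponent_budget u hu). assert (INR 5 = 5) by (simpl; lra). nra. }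
assert (h4 : 1 <= (x + 1) ^ 4) by (apply pow_R1_Rle; lra).
replace ((x + 1) ^ 5) with ((x + 1) * (x + 1) ^ 4) in hchain by ring.
assert (hA : (x + 1) * (M * e + 1) <= 2 * ((x + 1) * (x + 1) ^ 4) * e).
{ assert (M * e <= (x + 1) ^ 4 * e) by (apply Rmult_le_compat_r; lra).
  assert (x + 1 <= (x + 1) * (x + 1) ^ 4) by nra.
  nra. }
assert (hB : (x + 1) * (M * e + 1) < (x + 1) * (INR Q + 1)) by lra.
apply Rmult_lt_reg_l in hB; [fold e; lra | lra].
Qed.

Lemma div_succ_gt (a b : nat) : (0 < b)%nat -> INR a < INR b * (INR (a / b) + 1).
Proof.
intros hb; pose proof (Nat.mul_succ_div_gt a b ltac:(lia)) as d.
apply lt_INR in d; rewrite mult_INR, S_INR in d; exact d.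
Qed.

(* The parameters of the proof: J = floor(sqrt N) + 1, g = l / 3J and
   Q = 2^g / (N + 1).  For l in the range of the theorem,
   (N + tri l + 1)^2 N^(sqrt (ln N)) <= Q. *)
Lemma parameters_suffice (N L : nat) :
  (3 ^ 400 <= N)%nat -> sqrt (INR N) * (ln (INR N)) ^ 2 < INR L -> INR L <= INR N / 2 ->
  INR (S (N + ConcaveCompositions.tri L)) ^ 2 * exp (ln (INR N) * sqrt (ln (INR N)))
  <= INR (2 ^ (L / (3 * S (Nat.sqrt N))) / S N).
Proof.
intros hN h1 h2; pose proof (ln_threshold N hN) as hu.
assert (hN1 : (1 <= N)%nat) by (pose proof (Nat.pow_nonzero 3 400 ltac:(lia)); lia).
set (x := INR N) in *; set (J := S (Nat.sqrt N)); set (g := (L / (3 * J))%nat).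
assert (hx : 1 <= x) by (apply (le_INR 1); exact hN1).
apply (pow2_beats_error x _ g); auto.
- (* g >= u^2 / 6 - 1, since 3 J <= 6 sqrt N and L > sqrt N u^2 *)
  pose proof (div_succ_gt L (3 * J) ltac:(unfold J; lia)) as d.
  fold g in d; rewrite mult_INR in d; replace (INR 3) with 3 in d by (simpl; lra).
  pose proof (Nat.sqrt_spec' N) as [s1 _]; apply le_INR in s1; rewrite mult_INR in s1.
  assert (hs : INR (Nat.sqrt N) <= sqrt x).
  { rewrite <- (sqrt_square (INR (Nat.sqrt N))) by apply pos_INR.
    apply sqrt_le_1_alt; exact s1. }
  assert (hJ : INR J <= 2 * sqrt x).
  { assert (1 <= sqrt x) by (rewrite <- sqrt_1; apply sqrt_le_1_alt; lra).
    unfold J; rewrite S_INR; lra. }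
  assert (sx : 0 < sqrt x) by (apply sqrt_lt_R0; lra).
  assert (INR J * (INR g + 1) <= 2 * sqrt x * (INR g + 1))
    by (apply Rmult_le_compat_r; [pose proof (pos_INR g); lra | lra]).
  assert (h3 : sqrt x * (ln x * ln x) < sqrt x * (6 * (INR g + 1)))
    by (replace (ln x * ln x) with (ln x ^ 2) by ring; lra).
  apply Rmult_lt_reg_l in h3; lra.
- apply pow_le, pos_INR.
- (* N + tri L + 1 <= (N + 1)^2, as tri L <= L^2 <= N^2 *)
  assert (hLN : (L <= N)%nat) by (apply INR_le; fold x; lra).
  pose proof (ConcaveCompositions.tri_double_nat L).
  assert (hn : (S (N + ConcaveCompositions.tri L) <= S N * S N)%nat) by nia.
  apply le_INR in hn; rewrite mult_INR in hn.
  replace ((x + 1) ^ 4) with ((INR (S N) * INR (S N)) ^ 2)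
    by (rewrite S_INR; fold x; ring).
  apply pow_incr; split; [apply pos_INR | exact hn].
- pose proof (div_succ_gt (2 ^ g) (S N) ltac:(lia)) as d.
  rewrite pow_INR in d; replace (INR 2) with 2 in d by (simpl; lra).
  rewrite S_INR in d; fold x in d; lra.
Qed.

Lemma relative_error (V P Q M e : R) : 0 <= P -> 1 <= M -> 1 <= e -> M * e <= Q ->
  Q * V <= Q * P + M * P -> Q * P <= Q * V + M * P -> Rabs (V - P) <= 1 * P * / e.
Proof.
intros hP hM he hMe hU hL.
assert (hQ : 0 < Q) by nra.
assert (B1 : (V - P) * e <= P).
{ apply (Rmult_le_reg_l Q); [exact hQ|].
  assert (Q * (V - P) <= M * P) by lra. nra. }
assert (B2 : (P - V) * e <= P).
{ apply (Rmult_le_reg_l Q); [exact hQ|].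
  assert (Q * (P - V) <= M * P) by lra. nra. }
apply Rabs_le; split; apply (Rmult_le_reg_r e); try lra;
  field_simplify; lra.
Qed.

Theorem mainTheorem6 :
  exists (C : R) (N0 : nat),
    forall (N : nat) (l : Z),
      (N0 <= N)%nat ->
      sqrt (INR N) * (ln (INR N))^2 < IZR (Z.abs l) ->
      IZR (Z.abs l) <= INR N / 2 ->
      Rabs (INR (V_d l (N + (Z.abs_nat l * (Z.abs_nat l + 1)) / 2)%nat)
            - INR (p (Z.of_nat N)))
        <= C * INR (p (Z.of_nat N)) * Rpower (INR N) (- sqrt (ln (INR N))).
Proof.
exists 1, (3 ^ 400)%nat; intros N l hN h1 h2.
set (L := Z.abs_nat l).
assert (hL : IZR (Z.abs l) = INR L)
  by (unfold L; rewrite INR_IZR_INZ, Zabs2Nat.id_abs; reflexivity).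
rewrite hL in h1, h2.
assert (hT : ((L * (L + 1)) / 2 = ConcaveCompositions.tri L)%nat).
{ rewrite Nat.add_1_r, <- ConcaveCompositions.tri_double_nat, Nat.mul_comm, Nat.div_mul; lia. }
fold L; rewrite hT, ConcaveCompositions.V_d_abs; fold L.
assert (hN1 : (1 <= N)%nat) by (pose proof (Nat.pow_nonzero 3 400 ltac:(lia)); lia).
set (J := S (Nat.sqrt N)); set (g := (L / (3 * J))%nat); set (Q := (2 ^ g / S N)%nat).
destruct (@ConcaveCompositions.V_sandwich L N J g Q) as [U Lo].
- unfold J; lia.
- pose proof (Nat.sqrt_spec' N); unfold J; lia.
- unfold g; rewrite Nat.mul_comm; apply Nat.Div0.mul_div_le.
- unfold Q; apply Nat.Div0.mul_div_le.
- pose proof (parameters_suffice N L hN h1 h2) as K; fold J g Q in K.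
  apply le_INR in U; apply le_INR in Lo.
  rewrite !plus_INR, !mult_INR, !pow_INR in U, Lo.
  replace (Rpower (INR N) (- sqrt (ln (INR N))))
    with (/ exp (ln (INR N) * sqrt (ln (INR N))))
    by (unfold Rpower; rewrite <- exp_Ropp; f_equal; ring).
  apply (relative_error _ _ (INR Q) (INR (S (N + ConcaveCompositions.tri L)) ^ 2));
    auto using pos_INR.
  + apply pow_R1_Rle; rewrite S_INR; pose proof (pos_INR (N + ConcaveCompositions.tri L)); lra.
  + pose proof (exp_ineq1_le (ln (INR N) * sqrt (ln (INR N)))).
    pose proof (ln_threshold N hN); pose proof (sqrt_pos (ln (INR N))); nra.
Qed.
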